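(* Let $\mu>0$ and $k>0$. The function $T_l:(x_l,1)\to(0,+\infty)$ defined in the context is continuous, strictly decreasing, and satisfies: (i) $\displaystyle\lim_{x\to1^-}T_l(x)=\frac{1}{\sqrt{\mu}}\arctan\frac{k}{\sqrt{\mu}}$; (ii) $\displaystyle\lim_{x\to x_l^+}T_l(x)=+\infty$.
   Context: Let $G(u)=u^3/3-u^4/4$ for $u\in[0,1]$ (a primitive of $g(u)=u^2(1-u)$). Let $y(x)=-k(1-x)$ for $x\in(0,1)$ and let $x_l\in(0,1)$ be the abscissa of the unique intersection, in $(0,1)$, of the line $v=y(u)$ with the curve $v^2=2\mu G(u)$, $v<0$. For $x\in(x_l,1)$ one has $y(x)^2<2\mu G(x)$, and $m(x)$ denotes the unique number in $(0,x)$ with $2\mu G(m(x))=2\mu G(x)-y(x)^2$. Define $$T_l(x)=\int_{m(x)}^{x}\frac{du}{\sqrt{y(x)^2+2\mu(G(u)-G(x))}},\qquad x\in(x_l,1).$$ *)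

From Stdlib Require Import Reals Lra ClassicalEpsilon.
From Coquelicot Require Import Coquelicot.
Open Scope R_scope.

(* G(u) = u^3/3 - u^4/4, primitive of g(u) = u^2 (1-u). *)
Definition G (u : R) : R := u ^ 3 / 3 - u ^ 4 / 4.

Definition yk (k x : R) : R := - k * (1 - x).

Definition x_l (mu k : R) : R :=
  epsilon (inhabits 0)
    (fun u => 0 < u < 1 /\ yk k u < 0 /\ (yk k u) ^ 2 = 2 * mu * G u).

Definition m_of (mu k x : R) : R :=
  epsilon (inhabits 0)
    (fun m => 0 < m < x /\ 2 * mu * G m = 2 * mu * G x - (yk k x) ^ 2).

Definition integrand (mu k x u : R) : R :=
  / sqrt ((yk k x) ^ 2 + 2 * mu * (G u - G x)).

(* T_l(x) = int_{m(x)}^{x} du / sqrt(y(x)^2 + 2 mu (G(u) - G(x))),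
   an improper Riemann integral (singular at the lower end m(x)). *)
Definition T_l (mu k x : R) : R :=
  RInt_gen (integrand mu k x) (at_right (m_of mu k x)) (at_point x).

(* After the substitution q = sqrt (y(x)^2 + 2 mu (G u - G x)) / (k (1 - x)), which maps
   (m(x), x] onto (0, 1], T_l(x) becomes the proper integral over [0, 1] of
   F(x, q) = k (1 - x) / (mu g(U(x, q))), where U(x, q) in [m(x), x] solves
   G(U) = G(x) - k^2 (1 - q^2) (1 - x)^2 / (2 mu).  F is jointly continuous, so T_l is
   continuous.  For fixed q, g(U) / (1 - x) increases with x (its derivative has the sign of
   a polynomial that is positive on the relevant region), so T_l decreases.  Two-sided
   quadratic bounds on G give F1(q) <= F(x, q) <= F1(q) / m(x)^2 with
   F1(q) = k / (sqrt mu sqrt (mu + k^2 (1 - q^2))), whose integral is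
   atan (k / sqrt mu) / sqrt mu; since m(x) -> 1 as x -> 1 this gives the limit at 1.
   As x -> x_l, m(x) -> 0, and U <= 2 m(x) for q up to a multiple of m(x)^(3/2), where
   F >= k (1 - x) / (4 mu m(x)^2); hence T_l(x)^2 grows like 1 / m(x). *)

From Stdlib Require Import Reals Lra Psatz ClassicalEpsilon Ranalysis5.
From Coquelicot Require Import Coquelicot.
Open Scope R_scope.
Set Bullet Behavior "Strict Subproofs".

Lemma pow2_le_inv a b : 0 <= b -> a ^ 2 <= b ^ 2 -> a <= b.
Proof. intros Hb Hab. nra. Qed.

Lemma at_left_interval a b : a < b -> at_left b (fun x => a < x < b).
Proof.
  intros Hab. exists (mkposreal _ (proj2 (Rlt_0_minus _ _) Hab)). intros x Hx Hxb. simpl in Hx.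
  apply (Rabs_lt_between' x b) in Hx. lra.
Qed.

Lemma at_right_interval a b : a < b -> at_right a (fun x => a < x < b).
Proof.
  intros Hab. exists (mkposreal _ (proj2 (Rlt_0_minus _ _) Hab)). intros x Hx Hax. simpl in Hx.
  apply (Rabs_lt_between' x a) in Hx. lra.
Qed.

Lemma continuous_of_continuity_2d_pt (f : R -> R -> R) (x y : R) :
  continuity_2d_pt f x y -> continuous (f x) y.
Proof.
  intros Hf.
  apply (continuous_comp_2 (fun _ => x) (fun v => v) f y (continuous_const _ _) (continuous_id _)).
  apply continuity_2d_pt_filterlim, Hf.
Qed.

Lemma continuous_RInt_param (f : R -> R -> R) (a b x0 : R) : a <= b ->
  (forall t, a <= t <= b -> continuity_2d_pt f x0 t) ->
  locally x0 (fun x => ex_RInt (f x) a b) ->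
  continuous (fun x => RInt (f x) a b) x0.
Proof.
  intros Hab Hf Hint. apply filterlim_locally. intros eps.
  assert (He : 0 < eps / (b - a + 1)) by (apply Rdiv_lt_0_compat; [apply cond_pos | lra]).
  destruct (uniform_continuity_2d_1d' f a b x0 Hf (mkposreal _ He)) as [delta Hdelta].
  destruct Hint as [r Hr].
  assert (Hd : 0 < Rmin delta r) by (apply Rmin_pos; apply cond_pos).
  exists (mkposreal _ Hd). intros x Hx. simpl in Hx.
  apply (Rabs_lt_between' x x0) in Hx.
  pose proof (Rmin_l delta r). pose proof (Rmin_r delta r).
  assert (Hx0 : ex_RInt (f x0) a b) by (apply Hr, ball_center).
  assert (Hx1 : ex_RInt (f x) a b)
    by (apply Hr; change (Rabs (x - x0) < r); apply Rabs_lt_between'; lra).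
  change (Rabs (RInt (f x) a b - RInt (f x0) a b) < eps).
  assert (HM : RInt (f x) a b - RInt (f x0) a b = RInt (fun t => f x t - f x0 t) a b).
  { symmetry. exact (RInt_minus (f x) (f x0) a b Hx1 Hx0). }
  rewrite HM.
  apply Rle_lt_trans with ((b - a) * (eps / (b - a + 1))).
  - apply abs_RInt_le_const; [exact Hab | apply (ex_RInt_minus (f x) (f x0)); assumption |].
    intros t Ht. left.
    apply (Hdelta t x0 t x); try lra. rewrite Rminus_eq_0, Rabs_R0. apply cond_pos.
  - replace ((b - a) * (eps / (b - a + 1))) with (eps - eps / (b - a + 1)) by (field; lra).
    lra.
Qed.

Lemma is_RInt_gen_comp_at_right (f phi dphi h : R -> R) (a b : R) : a < b ->
  continuous phi a ->
  (forall u, a < u <= b -> is_derive phi u (dphi u) /\ continuous dphi u) ->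
  (forall u, a < u <= b -> continuous f (phi u)) ->
  locally (phi a) (fun z => ex_RInt f z (phi b)) ->
  (forall u, a < u <= b -> h u = dphi u * f (phi u)) ->
  is_RInt_gen h (at_right a) (at_point b) (RInt f (phi a) (phi b)).
Proof.
  intros Hab Hphi Hd Hf Hint Hh.
  apply (filterlimi_lim_ext_loc (fun st => RInt f (phi (fst st)) (phi b))).
  - exists (fun s => a < s < b) (fun t => t = b); [apply at_right_interval, Hab | reflexivity |].
    intros s t Hs ->. simpl.
    apply (is_RInt_ext (fun u => scal (dphi u) (f (phi u)))).
    { intros u Hu. rewrite Rmin_left, Rmax_right in Hu by lra. rewrite Hh by lra. reflexivity. }
    apply (is_RInt_comp (V := R_CompleteNormedModule)); rewrite Rmin_left, Rmax_right by lra;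
      intros u Hu; [apply Hf | apply Hd]; lra.
  - apply (filterlim_comp _ _ _ fst (fun s => RInt f (phi s) (phi b)) _ (at_right a)).
    + apply filterlim_fst.
    + apply (filterlim_filter_le_1 _ (filter_le_within _)).
      apply (continuous_comp phi (fun z => RInt f z (phi b))); [exact Hphi|].
      apply (continuous_RInt_2 f (phi a) (phi b)).
      apply (filter_imp _ _ (fun z => RInt_correct f z (phi b))). exact Hint.
Qed.

Definition g (u : R) : R := u ^ 2 * (1 - u).

Lemma G_0 : G 0 = 0.
Proof. unfold G; field. Qed.

Lemma G_1 : G 1 = 1 / 12.
Proof. unfold G; field. Qed.

Lemma is_derive_G u : is_derive G u (g u).
Proof. unfold G, g. auto_derive; [easy | field]. Qed.

Lemma continuous_G u : continuous G u.
Proof. apply (ex_derive_continuous G). exists (g u). apply is_derive_G. Qed.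

Lemma g_pos u : 0 < u < 1 -> 0 < g u.
Proof. intros Hu. unfold g. apply Rmult_lt_0_compat; [apply pow_lt|]; lra. Qed.

Lemma G_lt a b : 0 <= a -> a < b -> b <= 1 -> G a < G b.
Proof.
  intros Ha Hab Hb.
  assert (E : G b - G a = (b - a) * (a ^ 2 * (1 - b) + (b - a) * (a * (1 - b + a / 2))
                                     + (b - a) ^ 2 * (1 / 3 - (b - a) / 4)))
    by (unfold G; field).
  assert (0 < (b - a) ^ 2 * (1 / 3 - (b - a) / 4)) by (apply Rmult_lt_0_compat; [apply pow_lt|]; lra).
  assert (0 <= a ^ 2 * (1 - b)) by (apply Rmult_le_pos; [apply pow2_ge_0 | lra]).
  assert (0 <= (b - a) * (a * (1 - b + a / 2))) by (apply Rmult_le_pos; [|apply Rmult_le_pos]; lra).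
  nra.
Qed.

Lemma G_le a b : 0 <= a -> a <= b -> b <= 1 -> G a <= G b.
Proof. intros Ha Hab Hb. destruct (Req_dec a b) as [->|]; [lra|]. left; apply G_lt; lra. Qed.

Lemma G_lt_1_12 x : 0 <= x -> x < 1 -> G x < 1 / 12.
Proof. intros Hx0 Hx1. rewrite <- G_1. apply G_lt; lra. Qed.

Lemma G_lt_inv a b : 0 <= a <= 1 -> 0 <= b <= 1 -> G a < G b -> a < b.
Proof. intros Ha Hb HG. destruct (Rlt_or_le a b); auto. pose proof (G_le b a). lra. Qed.

Lemma G_sub_le a b : 0 <= a -> a <= b -> b <= 1 -> G b - G a <= b - a.
Proof.
  intros Ha Hab Hb.
  assert (E : G b - G a = (b - a) * ((a*a + a*b + b*b) / 3 - (a + b) * (a*a + b*b) / 4))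
    by (unfold G; field).
  rewrite E. assert (0 <= (a + b) * (a*a + b*b)) by (apply Rmult_le_pos; nra).
  assert (a*a + a*b + b*b <= 3) by nra.
  nra.
Qed.

Lemma G_ge_cube u : 0 <= u <= 1 -> u ^ 3 / 12 <= G u.
Proof.
  intros Hu. assert (E : G u - u ^ 3 / 12 = u ^ 3 * (1 - u) / 4) by (unfold G; field).
  assert (0 <= u ^ 3 * (1 - u)) by (apply Rmult_le_pos; [apply pow_le|]; lra).
  lra.
Qed.

Lemma G_sub_ge_cube a b : 0 <= a -> a <= b -> b <= 1 -> (1 - b) * (b ^ 3 - a ^ 3) / 3 <= G b - G a.
Proof.
  intros Ha Hab Hb.
  assert (E : G b - G a - (1 - b) * (b ^ 3 - a ^ 3) / 3
              = (b - a) ^ 2 * (b ^ 2 + 2 * a * b + 3 * a ^ 2) / 12) by (unfold G; field).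
  assert (0 <= (b - a) ^ 2 * (b ^ 2 + 2 * a * b + 3 * a ^ 2)) by (apply Rmult_le_pos; nra).
  lra.
Qed.

Lemma G_1_sub_ge u : 0 <= u <= 1 -> (1 - u) ^ 2 / 12 <= G 1 - G u.
Proof.
  intros Hu. assert (E : G 1 - G u = (1 - u) ^ 2 * (1 + 2 * u + 3 * u ^ 2) / 12) by (unfold G; field).
  rewrite E. assert (0 <= (1 - u) ^ 2) by apply pow2_ge_0. nra.
Qed.

Lemma G_sub_bounds a b : 0 <= a -> a <= b -> b <= 1 ->
  a ^ 2 * ((1 - a) ^ 2 - (1 - b) ^ 2) / 2 <= G b - G a <= ((1 - a) ^ 2 - (1 - b) ^ 2) / 2.
Proof.
  intros Ha Hab Hb. split.
  - assert (E : G b - G a - a ^ 2 * ((1 - a) ^ 2 - (1 - b) ^ 2) / 2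
                = (b - a) ^ 2 * ((b - a) * (1 / 3 - (b - a) / 4) + (1 - b) * a)) by (unfold G; field).
    assert (0 <= (b - a) ^ 2 * ((b - a) * (1 / 3 - (b - a) / 4) + (1 - b) * a))
      by (apply Rmult_le_pos; nra).
    lra.
  - assert (E : ((1 - a) ^ 2 - (1 - b) ^ 2) / 2 - (G b - G a)
                = (b - a) * ((b - a) ^ 2 * (2 / 3 - (b - a) / 4) + (1 - b) * (b - a) * (2 - (b - a))
                             + (1 - b) ^ 2 * (1 + b - 3 / 2 * (b - a)))) by (unfold G; field).
    assert (0 <= (b - a) ^ 2 * (2 / 3 - (b - a) / 4)) by (apply Rmult_le_pos; nra).
    assert (0 <= (1 - b) * (b - a) * (2 - (b - a))) by (apply Rmult_le_pos; nra).
    assert (0 <= (1 - b) ^ 2 * (1 + b - 3 / 2 * (b - a))) by (apply Rmult_le_pos; nra).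
    nra.
Qed.

Ltac nonneg := repeat match goal with
  | |- 0 <= _ + _ => apply Rplus_le_le_0_compat
  | |- 0 <= _ * _ => apply Rmult_le_pos
  | |- 0 <= _ ^ _ => apply pow_le
  end; try lra.

(* Since 2 u - 3 u^2 = g'(u), this is g(U) (1 - x)^2 times the x-derivative of
   g(U) / (1 - x) at U = u (see is_derive_W_pos). *)
Lemma key_polynomial_pos u x : 0 < u -> u <= x -> x < 1 ->
  0 < (2 * u - 3 * u ^ 2) * (g x * (1 - x) + 2 * (G x - G u)) + g u ^ 2.
Proof.
  intros Hu Hux Hx.
  assert (HGu : G u <= G x) by (apply G_le; lra).
  assert (Hgx : 0 <= g x * (1 - x)) by (unfold g; nonneg).
  destruct (Rlt_or_le u (2 / 3)) as [Hu23 | Hu23].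
  - assert (0 < 2 * u - 3 * u ^ 2) by nra.
    assert (0 < g u ^ 2) by (apply pow_lt, g_pos; lra).
    nra.
  - (* In a = 1 - x and d = x - u the expression is a combination of 1,
       3 u - 2 = 1 - 3 (a + d) and (2 + u) / 3 = 1 - (a + d) / 3 whose coefficients are
       polynomials in a, d with nonnegative coefficients. *)
    set (a := 1 - x). set (d := x - u).
    assert (Ha : 0 < a) by (unfold a; lra).
    assert (Hd : 0 <= d) by (unfold d; lra).
    assert (0 <= (4/3*d^3 + 4*a*d^2 + 4*a^2*d + 2*a^3) * (1 - 3*(a+d))) by (nonneg; unfold a, d; lra).
    assert (0 <= 7/6*d^4 + 14/3*a*d^3 + 7*a^2*d^2 + 4*a^3*d) by nonneg.
    assert (0 <= 1/6*d^6 + a*d^5 + 5/2*a^2*d^4 + 4*a^3*d^3 + 11/3*a^4*d^2 + 4/3*a^5*d) by nonneg.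
    assert (0 < (2*d^5 + 10*a*d^4 + 20*a^2*d^3 + 22*a^3*d^2 + 16*a^4*d + 6*a^5) * (1 - (a+d)/3)).
    { apply Rmult_lt_0_compat; [|unfold a, d; lra].
      assert (0 < 6 * a ^ 5) by (apply Rmult_lt_0_compat; [lra | apply pow_lt; lra]).
      assert (0 <= 2*d^5 + 10*a*d^4 + 20*a^2*d^3 + 22*a^3*d^2 + 16*a^4*d) by nonneg.
      lra. }
    replace ((2 * u - 3 * u ^ 2) * (g x * a + 2 * (G x - G u)) + g u ^ 2)
      with ((4/3*d^3 + 4*a*d^2 + 4*a^2*d + 2*a^3) * (1 - 3*(a+d))
            + (7/6*d^4 + 14/3*a*d^3 + 7*a^2*d^2 + 4*a^3*d)
            + (2*d^5 + 10*a*d^4 + 20*a^2*d^3 + 22*a^3*d^2 + 16*a^4*d + 6*a^5) * (1 - (a+d)/3)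
            + (1/6*d^6 + a*d^5 + 5/2*a^2*d^4 + 4*a^3*d^3 + 11/3*a^4*d^2 + 4/3*a^5*d))
      by (unfold a, d, g, G; field).
    lra.
Qed.

(* Inverse of G restricted to [0, 1]; unspecified outside [0, 1/12] = G([0, 1]). *)
Definition Ginv (s : R) : R := epsilon (inhabits 0) (fun u => 0 <= u <= 1 /\ G u = s).

Lemma Ginv_spec s : 0 <= s <= 1 / 12 -> 0 <= Ginv s <= 1 /\ G (Ginv s) = s.
Proof.
  intros Hs. unfold Ginv. apply epsilon_spec.
  destruct (IVT_cor (fun u => G u - s) 0 1) as [u [Hu HGu]].
  - intros u. apply continuity_minus; [|apply continuity_const; easy].
    intros v. apply continuity_pt_filterlim, continuous_G.
  - lra.
  - rewrite G_0, G_1. nra.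
  - exists u. split; [exact Hu | lra].
Qed.

Lemma Ginv_G u : 0 <= u <= 1 -> Ginv (G u) = u.
Proof.
  intros Hu. assert (HGu : 0 <= G u <= 1 / 12) by (rewrite <- G_0, <- G_1; split; apply G_le; lra).
  destruct (Ginv_spec _ HGu) as [H1 H2].
  destruct (Rtotal_order (Ginv (G u)) u) as [H | [H | H]]; auto.
  - pose proof (G_lt (Ginv (G u)) u ltac:(lra) H ltac:(lra)). lra.
  - pose proof (G_lt u (Ginv (G u)) ltac:(lra) H ltac:(lra)). lra.
Qed.

Lemma Ginv_lt s1 s2 : 0 <= s1 -> s1 < s2 -> s2 <= 1 / 12 -> Ginv s1 < Ginv s2.
Proof.
  intros H0 H12 H2. destruct (Ginv_spec s1) as [B1 E1]; [lra|].
  destruct (Ginv_spec s2) as [B2 E2]; [lra|].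
  apply G_lt_inv; auto. lra.
Qed.

Lemma Ginv_le s1 s2 : 0 <= s1 -> s1 <= s2 -> s2 <= 1 / 12 -> Ginv s1 <= Ginv s2.
Proof. intros. destruct (Req_dec s1 s2) as [->|]; [lra|]. left; apply Ginv_lt; lra. Qed.

Lemma Ginv_interior s : 0 < s < 1 / 12 -> 0 < Ginv s < 1.
Proof.
  intros Hs. rewrite <- (Ginv_G 0), <- (Ginv_G 1) by lra. rewrite G_0, G_1.
  split; apply Ginv_lt; lra.
Qed.

Lemma continuous_Ginv s : 0 < s < 1 / 12 -> continuous Ginv s.
Proof.
  intros Hs. apply continuity_pt_filterlim.
  apply (continuity_pt_recip_interv G Ginv 0 1 Rlt_0_1); rewrite ?G_0, ?G_1; try lra.
  - intros; apply G_lt; lra.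
  - intros. unfold comp, id. apply Ginv_spec; lra.
  - intros. apply Ginv_spec; lra.
  - intros; apply continuity_pt_filterlim, continuous_G.
Qed.

Lemma is_derive_Ginv s : 0 < s < 1 / 12 -> is_derive Ginv s (/ g (Ginv s)).
Proof.
  intros Hs. apply is_derive_Reals.
  assert (Hd : forall u, derivable_pt G u)
    by (intros u; exists (g u); apply is_derive_Reals, is_derive_G).
  assert (Hm : Ginv 0 <= Ginv s <= Ginv (1 / 12)) by (split; apply Ginv_le; lra).
  pose proof (derivable_pt_lim_recip_interv G Ginv 0 (1 / 12) s (fun a _ => Hd a)
    (proj2 (continuity_pt_filterlim _ _) (continuous_Ginv s Hs)) ltac:(lra) Hs Hm) as HD.
  rewrite (derive_pt_eq_0 _ _ _ _ (proj1 (is_derive_Reals _ _ _) (is_derive_G (Ginv s)))) in HD.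
  replace (/ g (Ginv s)) with (1 / g (Ginv s)) by (unfold Rdiv; ring).
  apply HD.
  - intros. unfold comp, id. apply Ginv_spec; lra.
  - apply Rgt_not_eq, g_pos, Ginv_interior, Hs.
Qed.

Section Period.

Variables mu k : R.
Hypothesis Hmu : 0 < mu.
Hypothesis Hk : 0 < k.

Local Notation xl := (x_l mu k).
Local Notation m := (m_of mu k).

Definition Gm (x : R) : R := G x - k ^ 2 * (1 - x) ^ 2 / (2 * mu).

Lemma k2_div_mu_nonneg : 0 <= k ^ 2 / mu.
Proof. apply Rdiv_le_0_compat; [apply pow2_ge_0 | exact Hmu]. Qed.

Lemma yk_sq x : yk k x ^ 2 = k ^ 2 * (1 - x) ^ 2.
Proof. unfold yk. ring. Qed.

Lemma Gm_lt a b : 0 <= a -> a < b -> b <= 1 -> Gm a < Gm b.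
Proof.
  intros Ha Hab Hb. unfold Gm. pose proof (G_lt a b Ha Hab Hb).
  assert (k ^ 2 * (1 - b) ^ 2 / (2 * mu) < k ^ 2 * (1 - a) ^ 2 / (2 * mu)).
  { apply Rmult_lt_compat_r; [apply Rinv_0_lt_compat; lra|].
    apply Rmult_lt_compat_l; [apply pow_lt; lra | nra]. }
  lra.
Qed.

Lemma x_l_spec : 0 < xl < 1 /\ Gm xl = 0.
Proof.
  assert (Hk2 : 0 < k ^ 2) by (apply pow_lt; lra).
  assert (Hex : exists u, 0 < u < 1 /\ yk k u < 0 /\ yk k u ^ 2 = 2 * mu * G u).
  { destruct (IVT_cor Gm 0 1) as [u [Hu HGu]].
    - intros v. apply continuity_pt_filterlim, (ex_derive_continuous Gm).
      unfold Gm. auto_derive. exists (g v). apply is_derive_G.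
    - lra.
    - unfold Gm. rewrite G_0, G_1. assert (0 < k ^ 2 / (2 * mu)) by (apply Rdiv_lt_0_compat; lra).
      nra.
    - assert (u <> 0) by (intros ->; unfold Gm in HGu; rewrite G_0 in HGu;
        assert (0 < k ^ 2 * (1 - 0) ^ 2 / (2 * mu)) by (apply Rdiv_lt_0_compat; nra); lra).
      assert (u <> 1) by (intros ->; unfold Gm in HGu; rewrite G_1 in HGu; nra).
      exists u. split; [lra|]. split; [unfold yk; nra|].
      rewrite yk_sq. unfold Gm in HGu. apply Rmult_eq_reg_r with (/ (2 * mu));
        [| apply Rinv_neq_0_compat; lra]. field_simplify; lra. }
  destruct (epsilon_spec (inhabits 0) _ Hex) as [Hxl [_ HG]]. fold (x_l mu k) in Hxl, HG.
  split; [exact Hxl|]. unfold Gm. rewrite yk_sq in HG.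
  apply Rmult_eq_reg_l with (2 * mu); [|lra]. field_simplify; lra.
Qed.

Lemma Gm_pos x : xl < x <= 1 -> 0 < Gm x.
Proof. intros Hx. destruct x_l_spec as [Hxl H0]. rewrite <- H0. apply Gm_lt; lra. Qed.

Lemma Gm_lt_G x : x < 1 -> Gm x < G x.
Proof.
  intros Hx. unfold Gm.
  assert (0 < k ^ 2 * (1 - x) ^ 2 / (2 * mu))
    by (apply Rdiv_lt_0_compat; [apply Rmult_lt_0_compat; apply pow_lt|]; lra).
  lra.
Qed.

Lemma m_spec x : xl < x < 1 -> 0 < m x < x /\ G (m x) = Gm x.
Proof.
  intros Hx. destruct x_l_spec as [Hxl _].
  pose proof (Gm_pos x ltac:(lra)). pose proof (Gm_lt_G x ltac:(lra)).
  pose proof (G_lt_1_12 x ltac:(lra) ltac:(lra)).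
  assert (Hex : exists u, 0 < u < x /\ 2 * mu * G u = 2 * mu * G x - yk k x ^ 2).
  { exists (Ginv (Gm x)). destruct (Ginv_spec (Gm x)) as [_ E]; [lra|].
    split; [split|].
    - rewrite <- (Ginv_G 0) by lra. rewrite G_0. apply Ginv_lt; lra.
    - rewrite <- (Ginv_G x) at 2 by lra. apply Ginv_lt; lra.
    - rewrite E, yk_sq. unfold Gm. field. lra. }
  destruct (epsilon_spec (inhabits 0) _ Hex) as [Hm HGm]. fold (m x) in Hm, HGm.
  split; [exact Hm|]. rewrite yk_sq in HGm. unfold Gm.
  apply Rmult_eq_reg_l with (2 * mu); [|lra]. rewrite HGm. field. lra.
Qed.

(* u = U x q is the point of [m x, x] at which Q x u = q (Q is defined below), and
   F x q is the integrand of T_l after this change of variables (integrand_eq). *)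
Definition K (q : R) : R := k ^ 2 * (1 - q ^ 2) / (2 * mu).
Definition S (x q : R) : R := G x - K q * (1 - x) ^ 2.
Definition U (x q : R) : R := Ginv (S x q).
Definition F (x q : R) : R := k * (1 - x) / (mu * g (U x q)).

Lemma K_bounds q : -1 <= q <= 1 -> 0 <= K q <= K 0.
Proof.
  intros Hq. unfold K. assert (0 < k ^ 2) by (apply pow_lt; lra).
  assert (0 <= q ^ 2 <= 1) by (split; nra).
  split.
  - apply Rdiv_le_0_compat; nra.
  - apply Rmult_le_compat_r; [left; apply Rinv_0_lt_compat; lra | nra].
Qed.

Lemma K0_eq : K 0 = k ^ 2 / (2 * mu).
Proof. unfold K. field. lra. Qed.

Lemma K0_pos : 0 < K 0.
Proof. rewrite K0_eq. apply Rdiv_lt_0_compat; [apply pow_lt |]; lra. Qed.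

Lemma S_bounds x q : xl < x < 1 -> -1 <= q <= 1 -> 0 < S x q < 1 / 12 /\ G (m x) <= S x q <= G x.
Proof.
  intros Hx Hq. destruct x_l_spec as [Hxl _]. destruct (K_bounds q Hq).
  destruct (m_spec x Hx) as [_ ->].
  pose proof (Gm_pos x ltac:(lra)). pose proof (G_lt_1_12 x ltac:(lra) ltac:(lra)).
  assert (0 <= (1 - x) ^ 2) by apply pow2_ge_0.
  assert (Gm x <= S x q <= G x).
  { replace (Gm x) with (G x - K 0 * (1 - x) ^ 2) by (rewrite K0_eq; unfold Gm; field; lra).
    unfold S. split; nra. }
  lra.
Qed.

Lemma U_spec x q : xl < x < 1 -> -1 <= q <= 1 -> G (U x q) = S x q /\ m x <= U x q <= x.
Proof.
  intros Hx Hq. destruct (S_bounds x q Hx Hq) as [HS [HmS HSx]].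
  destruct (m_spec x Hx) as [Hm _]. unfold U.
  assert (0 <= G (m x)) by (rewrite <- G_0; apply G_le; lra).
  pose proof (G_lt_1_12 x ltac:(lra) ltac:(lra)).
  split; [|split].
  - exact (proj2 (Ginv_spec (S x q) ltac:(lra))).
  - apply Rle_trans with (Ginv (G (m x))); [rewrite Ginv_G; lra | apply Ginv_le; lra].
  - apply Rle_trans with (Ginv (G x)); [apply Ginv_le; lra | rewrite Ginv_G; lra].
Qed.

Lemma U_interior x q : xl < x < 1 -> -1 <= q <= 1 -> 0 < U x q < 1.
Proof. intros Hx Hq. apply Ginv_interior, S_bounds; assumption. Qed.

Lemma F_pos x q : xl < x < 1 -> -1 <= q <= 1 -> 0 < F x q.
Proof.
  intros Hx Hq. pose proof (g_pos _ (U_interior x q Hx Hq)). unfold F.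
  apply Rdiv_lt_0_compat; apply Rmult_lt_0_compat; lra.
Qed.

Lemma continuity_2d_pt_F x q : xl < x < 1 -> -1 <= q <= 1 -> continuity_2d_pt F x q.
Proof.
  intros Hx Hq. destruct (S_bounds x q Hx Hq) as [HS _].
  pose proof (g_pos _ (U_interior x q Hx Hq)) as Hg.
  assert (HSc : continuity_2d_pt S x q).
  { unfold S. apply continuity_2d_pt_minus; [|apply continuity_2d_pt_mult].
    - apply (continuity_1d_2d_pt_comp G (fun u _ => u)); [|apply continuity_2d_pt_id1].
      apply continuity_pt_filterlim, continuous_G.
    - apply (continuity_1d_2d_pt_comp K (fun _ v => v)); [unfold K; reg | apply continuity_2d_pt_id2].
    - apply (continuity_1d_2d_pt_comp (fun u => (1 - u) ^ 2) (fun u _ => u));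
        [reg | apply continuity_2d_pt_id1]. }
  unfold F, Rdiv. apply continuity_2d_pt_mult.
  - apply (continuity_1d_2d_pt_comp (fun u => k * (1 - u)) (fun u _ => u));
      [reg | apply continuity_2d_pt_id1].
  - apply continuity_2d_pt_inv; [| apply Rgt_not_eq, Rmult_lt_0_compat; lra].
    apply (continuity_1d_2d_pt_comp (fun s => mu * g (Ginv s)) S); [|exact HSc].
    apply continuity_pt_filterlim, (continuous_comp Ginv (fun u => mu * g u)).
    + apply continuous_Ginv, HS.
    + apply (ex_derive_continuous (fun u => mu * g u)). unfold g. auto_derive. easy.
Qed.

Lemma continuous_F x q : xl < x < 1 -> -1 <= q <= 1 -> continuous (F x) q.
Proof. intros Hx Hq. apply continuous_of_continuity_2d_pt, continuity_2d_pt_F; assumption. Qed.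

Lemma ex_RInt_F x a b : xl < x < 1 -> -1 <= a -> a <= b -> b <= 1 -> ex_RInt (F x) a b.
Proof.
  intros Hx Ha Hab Hb. apply (ex_RInt_continuous (V := R_CompleteNormedModule)).
  rewrite Rmin_left, Rmax_right by lra. intros q Hq. apply continuous_F; [exact Hx | lra].
Qed.

Definition D (x u : R) : R := yk k x ^ 2 + 2 * mu * (G u - G x).
Definition Q (x u : R) : R := sqrt (D x u) / (k * (1 - x)).
Definition dQ (x u : R) : R := mu * g u / (k * (1 - x) * sqrt (D x u)).

Lemma D_eq x u : xl < x < 1 -> D x u = 2 * mu * (G u - G (m x)).
Proof. intros Hx. unfold D. rewrite yk_sq, (proj2 (m_spec x Hx)). unfold Gm. field. lra. Qed.

Lemma D_pos x u : xl < x < 1 -> m x < u <= 1 -> 0 < D x u.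
Proof.
  intros Hx Hu. rewrite D_eq by exact Hx. destruct (m_spec x Hx) as [Hm _].
  pose proof (G_lt (m x) u ltac:(lra) ltac:(lra) ltac:(lra)). nra.
Qed.

Lemma Q_m x : xl < x < 1 -> Q x (m x) = 0.
Proof.
  intros Hx. unfold Q. rewrite D_eq, Rminus_eq_0, Rmult_0_r, sqrt_0 by exact Hx.
  unfold Rdiv. ring.
Qed.

Lemma Q_x x : x < 1 -> Q x x = 1.
Proof.
  intros Hx. unfold Q, D. rewrite yk_sq, Rminus_eq_0, Rmult_0_r, Rplus_0_r, <- Rpow_mult_distr.
  rewrite sqrt_pow2 by (apply Rmult_le_pos; lra). field. split; lra.
Qed.

Lemma Q_sq x u : x < 1 -> 0 <= D x u -> Q x u ^ 2 = D x u / (k * (1 - x)) ^ 2.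
Proof.
  intros Hx HD. unfold Q, Rdiv. rewrite Rpow_mult_distr, pow2_sqrt by exact HD.
  rewrite pow_inv. reflexivity.
Qed.

Lemma Q_range x u : xl < x < 1 -> m x <= u <= x -> 0 <= Q x u <= 1.
Proof.
  intros Hx Hu. destruct (m_spec x Hx) as [Hm _].
  assert (0 <= D x u) by (rewrite D_eq by exact Hx; pose proof (G_le (m x) u); nra).
  assert (D x u <= (k * (1 - x)) ^ 2) by (unfold D; rewrite yk_sq; pose proof (G_le u x); nra).
  assert (Hkx : 0 < k * (1 - x)) by (apply Rmult_lt_0_compat; lra).
  split; [apply Rdiv_le_0_compat; [apply sqrt_pos | exact Hkx]|].
  apply Rmult_le_reg_r with (k * (1 - x)); [exact Hkx|].
  unfold Q, Rdiv. rewrite Rmult_assoc, Rinv_l, Rmult_1_r, Rmult_1_l by lra.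
  rewrite <- (sqrt_pow2 (k * (1 - x))) by lra. apply sqrt_le_1_alt. assumption.
Qed.

Lemma U_Q x u : xl < x < 1 -> m x <= u <= x -> U x (Q x u) = u.
Proof.
  intros Hx Hu. destruct (m_spec x Hx) as [Hm _].
  assert (HD : 0 <= D x u) by (rewrite D_eq by exact Hx; pose proof (G_le (m x) u); nra).
  unfold U. replace (S x (Q x u)) with (G u) by
    (unfold S, K; rewrite Q_sq by (auto; lra); unfold D; rewrite yk_sq; field; split; lra).
  apply Ginv_G. lra.
Qed.

Lemma is_derive_Q x u : x < 1 -> 0 < D x u -> is_derive (Q x) u (dQ x u).
Proof.
  intros Hx HD. unfold Q, dQ, D in *. auto_derive.
  - split; [exists (g u); apply is_derive_G | split; [lra | easy]].
  - replace (Derive (fun v => G v) u) with (g u) by (symmetry; apply is_derive_unique, is_derive_G).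
    replace (yk k x * (yk k x * 1) + 2 * mu * (G u + - G x))
      with (yk k x ^ 2 + 2 * mu * (G u - G x)) by ring.
    assert (0 < sqrt (yk k x ^ 2 + 2 * mu * (G u - G x))) by (apply sqrt_lt_R0; lra).
    field. repeat split; lra.
Qed.

Lemma continuous_D x u : continuous (D x) u.
Proof. apply (ex_derive_continuous (D x)). unfold D. auto_derive. exists (g u). apply is_derive_G. Qed.

Lemma continuous_Q x u : continuous (Q x) u.
Proof.
  apply (continuous_comp (fun v => sqrt (D x v)) (fun s => s / (k * (1 - x)))).
  - apply continuous_sqrt_comp, continuous_D.
  - apply (ex_derive_continuous (fun s => s / (k * (1 - x)))). auto_derive. easy.
Qed.

Lemma continuous_dQ x u : x < 1 -> 0 < D x u -> continuous (dQ x) u.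
Proof.
  intros Hx HD. unfold dQ, Rdiv. apply (continuous_mult (K := R_AbsRing)).
  - apply (ex_derive_continuous (fun v => mu * g v)). unfold g. auto_derive. easy.
  - apply (continuous_comp (fun v => k * (1 - x) * sqrt (D x v)) Rinv).
    + apply (continuous_mult (K := R_AbsRing) (fun _ => k * (1 - x))); [apply continuous_const|].
      apply continuous_sqrt_comp, continuous_D.
    + apply continuity_pt_filterlim, continuity_pt_inv; [apply continuity_pt_id|].
      apply Rgt_not_eq, Rmult_lt_0_compat; [apply Rmult_lt_0_compat; lra | apply sqrt_lt_R0, HD].
Qed.

Lemma integrand_eq x u : xl < x < 1 -> m x < u <= x -> integrand mu k x u = dQ x u * F x (Q x u).
Proof.
  intros Hx Hu. unfold F. rewrite U_Q by (auto; lra).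
  pose proof (D_pos x u Hx ltac:(lra)). destruct (m_spec x Hx) as [Hm _].
  pose proof (g_pos u ltac:(lra)). assert (0 < sqrt (D x u)) by (apply sqrt_lt_R0; lra).
  unfold integrand, dQ. fold (D x u). field. repeat split; lra.
Qed.

Lemma T_l_is_RInt_gen x : xl < x < 1 ->
  is_RInt_gen (integrand mu k x) (at_right (m x)) (at_point x) (RInt (F x) 0 1).
Proof.
  intros Hx. destruct (m_spec x Hx) as [Hm _].
  rewrite <- (Q_m x Hx), <- (Q_x x) by lra.
  apply (is_RInt_gen_comp_at_right _ _ (dQ x)); [lra | apply continuous_Q | | | |].
  - intros u Hu. pose proof (D_pos x u Hx ltac:(lra)).
    split; [apply is_derive_Q | apply continuous_dQ]; lra.
  - intros u Hu. apply continuous_F; [exact Hx|]. pose proof (Q_range x u Hx ltac:(lra)). lra.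
  - rewrite Q_m, Q_x by lra. exists (mkposreal _ Rlt_0_1). intros z Hz. 
    apply (Rabs_lt_between' z 0) in Hz. simpl in Hz. apply ex_RInt_F; lra.
  - intros u Hu. apply integrand_eq; assumption.
Qed.

Lemma T_l_eq x : xl < x < 1 -> T_l mu k x = RInt (F x) 0 1.
Proof.
  intros Hx. exact (is_RInt_gen_unique _ _ (T_l_is_RInt_gen x Hx)).
Qed.

Lemma T_l_pos x : xl < x < 1 -> 0 < T_l mu k x.
Proof.
  intros Hx. rewrite T_l_eq by exact Hx.
  apply RInt_gt_0; [lra | |]; intros q Hq; [apply F_pos | apply continuous_F]; auto; lra.
Qed.

Lemma continuous_T_l x0 : xl < x0 < 1 -> continuous (T_l mu k) x0.
Proof.
  intros Hx0.
  assert (Hnear : locally x0 (fun x => xl < x < 1))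
    by (apply open_and; [apply open_gt | apply open_lt | exact Hx0]).
  apply continuous_ext_loc with (fun x => RInt (F x) 0 1).
  - apply (filter_imp (fun x => xl < x < 1)); [|exact Hnear]. intros x Hx. symmetry; apply T_l_eq, Hx.
  - apply continuous_RInt_param; [lra | |].
    + intros t Ht. apply continuity_2d_pt_F; [exact Hx0 | lra].
    + apply (filter_imp (fun x => xl < x < 1)); [|exact Hnear]. intros x Hx. apply ex_RInt_F; lra.
Qed.

Lemma is_derive_U x q : xl < x < 1 -> -1 <= q <= 1 ->
  is_derive (fun z => U z q) x ((g x + 2 * K q * (1 - x)) / g (U x q)).
Proof.
  intros Hx Hq. destruct (S_bounds x q Hx Hq) as [HS _].
  assert (HdS : is_derive (fun z => S z q) x (g x + 2 * K q * (1 - x))).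
  { unfold S. auto_derive; [exists (g x); apply is_derive_G|].
    replace (Derive (fun v => G v) x) with (g x) by (symmetry; apply is_derive_unique, is_derive_G).
    ring. }
  exact (is_derive_comp Ginv (fun z => S z q) x _ _ (is_derive_Ginv _ HS) HdS).
Qed.

Definition W (x q : R) : R := g (U x q) / (1 - x).

Lemma is_derive_W_pos x q : xl < x < 1 -> -1 <= q <= 1 ->
  exists d, is_derive (fun z => W z q) x d /\ 0 < d.
Proof.
  intros Hx Hq. pose proof (is_derive_U x q Hx Hq) as HU.
  destruct (U_spec x q Hx Hq) as [HGU HUx]. pose proof (U_interior x q Hx Hq) as HU01.
  pose proof (g_pos _ HU01) as Hg.
  set (u := U x q) in *. set (du := (g x + 2 * K q * (1 - x)) / g u) in *.
  exists (((2 * u - 3 * u ^ 2) * du * (1 - x) + g u) / (1 - x) ^ 2). split.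
  - unfold W, g. auto_derive.
    + repeat split; try (exists du; exact HU). lra.
    + replace (Derive (fun z => U z q) x) with du by (symmetry; apply is_derive_unique, HU).
      fold u. field. lra.
  - assert (E : (2 * u - 3 * u ^ 2) * du * (1 - x) + g u
                = ((2 * u - 3 * u ^ 2) * (g x * (1 - x) + 2 * (G x - G u)) + g u ^ 2) / g u).
    { unfold du. rewrite HGU. unfold S. field. lra. }
    rewrite E. apply Rdiv_lt_0_compat; [apply Rdiv_lt_0_compat|apply pow_lt]; try lra.
    apply key_polynomial_pos; lra.
Qed.

Lemma W_increasing q x1 x2 : -1 <= q <= 1 -> xl < x1 -> x1 < x2 -> x2 < 1 -> W x1 q < W x2 q.
Proof.
  intros Hq H1 H12 H2.
  apply (incr_function (fun z => W z q) xl 1 (fun z => Derive (fun z => W z q) z)); simpl; try lra.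
  - intros x Hxl Hx1. destruct (is_derive_W_pos x q ltac:(lra) Hq) as [d [Hd _]].
    apply Derive_correct. exists d. exact Hd.
  - intros x Hxl Hx1. destruct (is_derive_W_pos x q ltac:(lra) Hq) as [d [Hd Hd0]].
    erewrite is_derive_unique by exact Hd. lra.
Qed.

Lemma F_eq_W x q : xl < x < 1 -> -1 <= q <= 1 -> F x q = k / mu / W x q.
Proof.
  intros Hx Hq. pose proof (g_pos _ (U_interior x q Hx Hq)).
  unfold F, W. field. repeat split; lra.
Qed.

Lemma F_decreasing q x1 x2 : -1 <= q <= 1 -> xl < x1 -> x1 < x2 -> x2 < 1 -> F x2 q < F x1 q.
Proof.
  intros Hq H1 H12 H2. destruct x_l_spec as [Hxl _].
  rewrite !F_eq_W by (auto; lra).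
  pose proof (W_increasing q x1 x2 Hq H1 H12 H2).
  assert (0 < W x1 q)
    by (apply Rdiv_lt_0_compat; [apply g_pos, U_interior|]; auto; lra).
  unfold Rdiv at 1 3. apply Rmult_lt_compat_l; [apply Rdiv_lt_0_compat; lra|].
  apply Rinv_lt_contravar; [apply Rmult_lt_0_compat|]; lra.
Qed.

Lemma T_l_decreasing x1 x2 : xl < x1 -> x1 < x2 -> x2 < 1 -> T_l mu k x2 < T_l mu k x1.
Proof.
  intros H1 H12 H2. rewrite !T_l_eq by lra.
  apply RInt_lt; [lra | | |]; intros q Hq.
  - apply continuous_F; lra.
  - apply continuous_F; lra.
  - apply F_decreasing; lra.
Qed.

Definition F1 (q : R) : R := k / (sqrt mu * sqrt (mu + k ^ 2 - k ^ 2 * q ^ 2)).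
Definition L0 : R := / sqrt mu * atan (k / sqrt mu).
Definition Phi (q : R) : R := / sqrt mu * atan (k * q / sqrt (mu + k ^ 2 - k ^ 2 * q ^ 2)).

Lemma F1_eq q : -1 <= q <= 1 -> F1 q = k / (mu * sqrt (1 + 2 * K q)).
Proof.
  intros Hq. pose proof (K_bounds q Hq). unfold F1.
  replace (mu + k ^ 2 - k ^ 2 * q ^ 2) with (mu * (1 + 2 * K q)) by (unfold K; field; lra).
  rewrite sqrt_mult, <- Rmult_assoc, sqrt_sqrt by lra. reflexivity.
Qed.

Lemma F1_radicand_pos q : -1 <= q <= 1 -> 0 < mu + k ^ 2 - k ^ 2 * q ^ 2.
Proof.
  intros Hq. assert (0 <= k ^ 2 * (1 - q ^ 2)) by (apply Rmult_le_pos; [apply pow2_ge_0 | nra]).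
  lra.
Qed.

Lemma is_derive_Phi q : -1 <= q <= 1 -> is_derive Phi q (F1 q).
Proof.
  intros Hq. pose proof (F1_radicand_pos q Hq) as HA.
  assert (Hsm : 0 < sqrt mu) by (apply sqrt_lt_R0; lra).
  assert (HS : 0 < sqrt (mu + k ^ 2 - k ^ 2 * q ^ 2)) by (apply sqrt_lt_R0; lra).
  pose proof (sqrt_sqrt (mu + k ^ 2 - k ^ 2 * q ^ 2) ltac:(lra)) as HSS.
  unfold Phi, F1. auto_derive;
    replace (mu + k * (k * 1) + - (k * (k * 1) * (q * (q * 1))))
      with (mu + k ^ 2 - k ^ 2 * q ^ 2) by ring.
  - repeat split; lra.
  - set (s := sqrt (mu + k ^ 2 - k ^ 2 * q ^ 2)) in *.
    field_simplify_eq; [|repeat split; try lra; nra].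
    replace (s ^ 3) with (s * (s * s)) by ring. replace (s ^ 2) with (s * s) by ring.
    rewrite HSS. ring.
Qed.

Lemma continuous_F1 q : -1 <= q <= 1 -> continuous F1 q.
Proof.
  intros Hq. pose proof (F1_radicand_pos q Hq) as HA.
  assert (0 < sqrt mu * sqrt (mu + k ^ 2 - k ^ 2 * q ^ 2))
    by (apply Rmult_lt_0_compat; apply sqrt_lt_R0; lra).
  apply (ex_derive_continuous F1). unfold F1. auto_derive.
  replace (mu + k * (k * 1) + - (k * (k * 1) * (q * (q * 1))))
    with (mu + k ^ 2 - k ^ 2 * q ^ 2) by ring.
  repeat split; lra.
Qed.

Lemma is_RInt_F1 : is_RInt F1 0 1 L0.
Proof.
  replace L0 with (minus (Phi 1) (Phi 0)).
  - apply (is_RInt_derive (V := R_CompleteNormedModule));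
      rewrite Rmin_left, Rmax_right by lra; intros q Hq.
    + apply is_derive_Phi. lra.
    + apply continuous_F1. lra.
  - change (Phi 1 - Phi 0 = L0). unfold Phi, L0.
    replace (mu + k ^ 2 - k ^ 2 * 1 ^ 2) with mu by ring.
    unfold Rdiv. rewrite Rmult_0_r, Rmult_0_l, atan_0, Rmult_1_r. ring.
Qed.

Lemma F_bounds x q : xl < x < 1 -> 0 <= q <= 1 -> F1 q <= F x q <= F1 q / m x ^ 2.
Proof.
  intros Hx Hq. pose proof (K_bounds q ltac:(lra)) as HK.
  destruct (m_spec x Hx) as [Hm _].
  destruct (U_spec x q Hx ltac:(lra)) as [HGU HUm]. pose proof (U_interior x q Hx ltac:(lra)) as HU.
  set (u := U x q) in *. set (s := sqrt (1 + 2 * K q)).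
  assert (Hs : 1 <= s) by (rewrite <- sqrt_1; apply sqrt_le_1_alt; lra).
  assert (Hs2 : s ^ 2 = 1 + 2 * K q) by (apply pow2_sqrt; lra).
  assert (HGxu : G x - G u = K q * (1 - x) ^ 2) by (rewrite HGU; unfold S; ring).
  destruct (G_sub_bounds u x ltac:(lra) ltac:(lra) ltac:(lra)) as [Hlow Hup].
  assert (Hw1 : (1 - x) * s <= 1 - u).
  { apply pow2_le_inv; [lra|]. rewrite Rpow_mult_distr, Hs2. nra. }
  assert (Hw2 : u * (1 - u) <= (1 - x) * s).
  { apply pow2_le_inv; [apply Rmult_le_pos; lra|]. rewrite !Rpow_mult_distr, Hs2.
    assert (u ^ 2 * (1 - x) ^ 2 <= (1 - x) ^ 2).
    { rewrite <- (Rmult_1_l ((1 - x) ^ 2)) at 2.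
      apply Rmult_le_compat_r; [apply pow2_ge_0 | nra]. }
    lra. }
  rewrite F1_eq by lra. fold s. unfold F, g. fold u.
  assert (0 < m x ^ 2 <= u ^ 2) by (split; [apply pow_lt | apply pow_incr]; lra).
  assert (Hkx : 0 < k * (1 - x)) by (apply Rmult_lt_0_compat; lra).
  assert (Hxs : 0 < (1 - x) * s) by (apply Rmult_lt_0_compat; lra).
  assert (Hg : 0 < u ^ 2 * (1 - u)) by apply (g_pos u), HU.
  split.
  - replace (k / (mu * s)) with (k * (1 - x) / (mu * ((1 - x) * s))) by (field; repeat split; lra).
    apply Rmult_le_compat_l; [lra|]. apply Rinv_le_contravar; [apply Rmult_lt_0_compat; lra|].
    apply Rmult_le_compat_l; [lra|].
    replace (u ^ 2 * (1 - u)) with (u * (u * (1 - u))) by ring.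
    assert (0 <= u * (1 - u)) by (apply Rmult_le_pos; lra).
    nra.
  - replace (k / (mu * s) / m x ^ 2) with (k * (1 - x) / (mu * (m x ^ 2 * ((1 - x) * s))))
      by (field; repeat split; lra).
    apply Rmult_le_compat_l; [lra|].
    apply Rinv_le_contravar; [apply Rmult_lt_0_compat; [|apply Rmult_lt_0_compat]; lra|].
    apply Rmult_le_compat_l; [lra|]. apply Rmult_le_compat; lra.
Qed.

Lemma T_l_bounds x : xl < x < 1 -> L0 <= T_l mu k x <= L0 / m x ^ 2.
Proof.
  intros Hx. rewrite T_l_eq by exact Hx. destruct (m_spec x Hx) as [Hm _].
  assert (HF1 : ex_RInt F1 0 1) by (exists L0; apply is_RInt_F1).
  assert (HL0 : RInt F1 0 1 = L0) by apply is_RInt_unique, is_RInt_F1.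
  assert (HF : ex_RInt (F x) 0 1) by (apply ex_RInt_F; lra).
  split.
  - rewrite <- HL0. apply RInt_le; [lra | exact HF1 | exact HF |].
    intros q Hq. apply F_bounds; [exact Hx | lra].
  - replace (L0 / m x ^ 2) with (RInt (fun q => / m x ^ 2 * F1 q) 0 1).
    + apply RInt_le; [lra | exact HF | apply (ex_RInt_scal F1 0 1 (/ m x ^ 2) HF1) |].
      intros q Hq. rewrite Rmult_comm. apply F_bounds; [exact Hx | lra].
    + etransitivity; [apply (RInt_scal F1 0 1 (/ m x ^ 2) HF1)|].
      rewrite HL0. change (/ m x ^ 2 * L0 = L0 / m x ^ 2). unfold Rdiv. ring.
Qed.

Lemma one_sub_m_le x : xl < x < 1 -> 1 - m x <= sqrt (6 * (1 + k ^ 2 / mu)) * (1 - x).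
Proof.
  intros Hx. destruct (m_spec x Hx) as [Hm HGm]. destruct x_l_spec as [Hxl _].
  pose proof (G_1_sub_ge (m x) ltac:(lra)) as Hlow.
  destruct (G_sub_bounds x 1 ltac:(lra) ltac:(lra) ltac:(lra)) as [_ Hup].
  pose proof k2_div_mu_nonneg.
  apply pow2_le_inv; [apply Rmult_le_pos; [apply sqrt_pos | lra]|].
  rewrite Rpow_mult_distr, pow2_sqrt by lra.
  rewrite HGm in Hlow. unfold Gm in Hlow.
  replace (k ^ 2 * (1 - x) ^ 2 / (2 * mu)) with (k ^ 2 / mu * (1 - x) ^ 2 / 2) in Hlow
    by (field; lra).
  lra.
Qed.

Lemma m_lim_1 : filterlim m (at_left 1) (locally 1).
Proof.
  destruct x_l_spec as [Hxl _]. set (c := sqrt (6 * (1 + k ^ 2 / mu))).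
  apply (filterlim_le_le (fun x => 1 - c * (1 - x)) m (fun _ => 1) (Finite 1)).
  - apply (filter_imp (fun x => xl < x < 1)); [|apply at_left_interval; lra].
    intros x Hx. pose proof (one_sub_m_le x Hx) as Hc. fold c in Hc. pose proof (m_spec x Hx). lra.
  - apply (filterlim_filter_le_1 _ (filter_le_within _)).
    replace (Finite 1) with (Finite (1 - c * (1 - 1))) by (f_equal; ring).
    apply (ex_derive_continuous (fun x => 1 - c * (1 - x))). auto_derive. easy.
  - apply filterlim_const.
Qed.

Lemma T_l_lim_1 : filterlim (T_l mu k) (at_left 1) (locally L0).
Proof.
  destruct x_l_spec as [Hxl _].
  apply (filterlim_le_le (fun _ => L0) (T_l mu k) (fun x => L0 / m x ^ 2) (Finite L0)).
  - apply (filter_imp (fun x => xl < x < 1)); [|apply at_left_interval; lra].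
    exact T_l_bounds.
  - apply filterlim_const.
  - replace (Finite L0) with (Finite (L0 / 1 ^ 2)) by (f_equal; field).
    apply (filterlim_comp _ _ _ m (fun t => L0 / t ^ 2) _ (locally 1) _ m_lim_1).
    apply (ex_derive_continuous (fun t => L0 / t ^ 2)). auto_derive. lra.
Qed.

Lemma Gm_le_linear x : xl <= x <= 1 -> Gm x <= (1 + k ^ 2 / mu) * (x - xl).
Proof.
  intros Hx. destruct x_l_spec as [Hxl HG0].
  pose proof (G_sub_le xl x ltac:(lra) ltac:(lra) ltac:(lra)).
  replace (Gm x) with (Gm x - Gm xl) by (rewrite HG0; ring). unfold Gm.
  replace (k ^ 2 * (1 - x) ^ 2 / (2 * mu))
    with (k ^ 2 * (1 - xl) ^ 2 / (2 * mu) - k ^ 2 / mu * (x - xl) * ((2 - x - xl) / 2))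
    by (field; lra).
  assert (0 <= k ^ 2 / mu * (x - xl) * (1 - (2 - x - xl) / 2))
    by (pose proof k2_div_mu_nonneg; apply Rmult_le_pos; [apply Rmult_le_pos |]; lra).
  nra.
Qed.

Lemma m_lim_x_l : filterlim m (at_right xl) (locally 0).
Proof.
  destruct x_l_spec as [Hxl _]. apply filterlim_locally. intros eps.
  set (C := 1 + k ^ 2 / mu).
  assert (HC : 0 < C) by (pose proof k2_div_mu_nonneg; unfold C; lra).
  assert (Hd : 0 < eps ^ 3 / (12 * C)) by (apply Rdiv_lt_0_compat; [apply pow_lt, cond_pos | lra]).
  apply (filter_imp (fun x => xl < x < Rmin 1 (xl + eps ^ 3 / (12 * C)))).
  - intros x Hx.
    pose proof (Rmin_l 1 (xl + eps ^ 3 / (12 * C))). pose proof (Rmin_r 1 (xl + eps ^ 3 / (12 * C))).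
    destruct (m_spec x ltac:(lra)) as [Hm HGm].
    pose proof (G_ge_cube (m x) ltac:(lra)). pose proof (Gm_le_linear x ltac:(lra)). fold C in H2.
    assert (m x ^ 3 < eps ^ 3).
    { apply Rle_lt_trans with (12 * (C * (x - xl))); [lra|].
      apply Rlt_le_trans with (12 * (C * (eps ^ 3 / (12 * C)))); [|right; field; lra].
      apply Rmult_lt_compat_l; [lra|]. apply Rmult_lt_compat_l; lra. }
    change (Rabs (m x - 0) < eps). rewrite Rminus_0_r, Rabs_right by lra.
    destruct (Rlt_or_le (m x) eps) as [|Hle]; [assumption|].
    pose proof (cond_pos eps). pose proof (pow_incr eps (m x) 3 ltac:(lra)). lra.
  - apply at_right_interval. apply Rmin_glb_lt; lra.
Qed.

Lemma U_le_twice_m x q : xl < x < 1 -> 0 <= q <= 1 ->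
  3 * K 0 * (1 - x) * q ^ 2 <= m x ^ 3 -> U x q <= 2 * m x.
Proof.
  intros Hx Hq Hsmall. destruct (m_spec x Hx) as [Hm HGm].
  destruct (U_spec x q Hx ltac:(lra)) as [HGU HUm].
  set (u := U x q) in *.
  assert (E : G u - G (m x) = K 0 * q ^ 2 * (1 - x) ^ 2)
    by (rewrite HGU, HGm; unfold S, Gm, K; field; lra).
  pose proof (G_sub_ge_cube (m x) u ltac:(lra) ltac:(lra) ltac:(lra)) as Hcube.
  assert (Hux : (1 - x) * (u ^ 3 - m x ^ 3) <= (1 - x) * (3 * K 0 * q ^ 2 * (1 - x))).
  { assert (0 <= u ^ 3 - m x ^ 3) by (pose proof (pow_incr (m x) u 3 ltac:(lra)); lra).
    assert ((1 - x) * (u ^ 3 - m x ^ 3) <= (1 - u) * (u ^ 3 - m x ^ 3))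
      by (apply Rmult_le_compat_r; lra).
    lra. }
  apply Rmult_le_reg_l in Hux; [|lra].
  destruct (Rle_or_lt u (2 * m x)) as [|Hlt]; [assumption|].
  pose proof (pow_lt (m x) 3 ltac:(lra)).
  assert (0 < (u - 2 * m x) * (u ^ 2 + 2 * m x * u + 4 * m x ^ 2))
    by (apply Rmult_lt_0_compat; nra).
  assert (u ^ 3 - (2 * m x) ^ 3 = (u - 2 * m x) * (u ^ 2 + 2 * m x * u + 4 * m x ^ 2)) by ring.
  lra.
Qed.

Lemma T_l_sq_ge x : xl < x < 1 -> m x ^ 3 <= 3 * K 0 * (1 - x) ->
  1 - x <= 24 * mu * m x * T_l mu k x ^ 2.
Proof.
  intros Hx Hsmall. destruct (m_spec x Hx) as [Hm _].
  set (A := 3 * K 0 * (1 - x)) in *.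
  assert (HA : 0 < A) by (pose proof K0_pos; apply Rmult_lt_0_compat; lra).
  set (q0 := sqrt (m x ^ 3 / A)).
  assert (Hq0sq : q0 ^ 2 = m x ^ 3 / A)
    by (apply pow2_sqrt, Rdiv_le_0_compat; [apply pow_le|]; lra).
  assert (HAq0 : A * q0 ^ 2 = m x ^ 3) by (rewrite Hq0sq; field; lra).
  assert (Hq0 : 0 <= q0 <= 1).
  { split; [apply sqrt_pos|]. apply pow2_le_inv; [lra|]. nra. }
  (* On [0, q0] we have U <= 2 m x, so that F >= c. *)
  set (c := k * (1 - x) / (4 * mu * m x ^ 2)).
  assert (Hmx2 : 0 < m x ^ 2) by (apply pow_lt; lra).
  assert (HFc : forall q, 0 <= q <= q0 -> c <= F x q).
  { intros q Hq. pose proof (U_interior x q Hx ltac:(lra)).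
    assert (HU2 : U x q <= 2 * m x).
    { apply U_le_twice_m; [exact Hx | lra |]. fold A. rewrite <- HAq0.
      apply Rmult_le_compat_l; [lra | apply pow_incr; lra]. }
    unfold F, c, g. apply Rmult_le_compat_l; [apply Rmult_le_pos; lra|].
    apply Rinv_le_contravar; [apply Rmult_lt_0_compat; [lra | apply (g_pos (U x q)); lra]|].
    assert (U x q ^ 2 <= (2 * m x) ^ 2) by (apply pow_incr; lra).
    assert (U x q ^ 2 * (1 - U x q) <= U x q ^ 2) by (pose proof (pow2_ge_0 (U x q)); nra).
    nra. }
  assert (HT : q0 * c <= T_l mu k x).
  { rewrite T_l_eq by exact Hx.
    rewrite <- (RInt_Chasles (F x) 0 q0 1) by (apply ex_RInt_F; lra).
    change (plus (RInt (F x) 0 q0) (RInt (F x) q0 1)) with (RInt (F x) 0 q0 + RInt (F x) q0 1).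
    assert (0 <= RInt (F x) q0 1).
    { apply RInt_ge_0; [lra | apply ex_RInt_F; lra|]. intros q Hq. left. apply F_pos; lra. }
    assert (q0 * c <= RInt (F x) 0 q0).
    { replace (q0 * c) with (RInt (fun _ => c) 0 q0)
        by (rewrite RInt_const; change ((q0 - 0) * c = q0 * c); ring).
      apply RInt_le; [lra | apply ex_RInt_const | apply ex_RInt_F; lra |].
      intros q Hq. apply HFc. lra. }
    lra. }
  assert (E : 24 * mu * m x * (q0 * c) ^ 2 = 1 - x).
  { rewrite Rpow_mult_distr, Hq0sq. unfold c, A. rewrite K0_eq. field. repeat split; lra. }
  assert (0 <= c) by (apply Rdiv_le_0_compat; [apply Rmult_le_pos | apply Rmult_lt_0_compat]; lra).
  rewrite <- E. apply Rmult_le_compat_l; [apply Rmult_le_pos; lra|].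
  apply pow_incr. split; [apply Rmult_le_pos; lra | exact HT].
Qed.

Lemma T_l_lim_x_l : filterlim (T_l mu k) (at_right xl) (Rbar_locally p_infty).
Proof.
  destruct x_l_spec as [Hxl _]. intros P [M HP]. unfold filtermap.
  set (a := (1 - xl) / 2). assert (Ha : a = (1 - xl) / 2) by reflexivity.
  set (M' := Rmax M 0 + 1).
  assert (HM' : Rmax M 0 < M') by (unfold M'; lra). pose proof (Rmax_l M 0). pose proof (Rmax_r M 0).
  pose proof K0_pos as HK0.
  assert (HM2 : 0 < 24 * mu * M' ^ 2) by (apply Rmult_lt_0_compat; [lra | apply pow_lt; lra]).
  set (delta := Rmin (3 * K 0 * a) (a / (24 * mu * M' ^ 2))).
  assert (Hd1 : delta <= 3 * K 0 * a) by apply Rmin_l.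
  assert (Hd2 : delta * (24 * mu * M' ^ 2) <= a).
  { apply Rle_trans with (a / (24 * mu * M' ^ 2) * (24 * mu * M' ^ 2)).
    - apply Rmult_le_compat_r; [lra | apply Rmin_r].
    - right. field. repeat split; lra. }
  assert (Hdelta : 0 < delta)
    by (apply Rmin_pos; [apply Rmult_lt_0_compat | apply Rdiv_lt_0_compat]; lra).
  pose proof (proj1 (filterlim_locally _ _) m_lim_x_l (mkposreal _ Hdelta)) as Hm.
  apply (filter_imp (fun x => xl < x < xl + a /\ ball 0 delta (m x)));
    [| apply filter_and; [apply at_right_interval; lra | exact Hm]].
  intros x [Hx Hball]. apply HP.
  assert (Hx' : xl < x < 1) by lra. destruct (m_spec x Hx') as [Hmx _].
  change (Rabs (m x - 0) < delta) in Hball. rewrite Rminus_0_r, Rabs_right in Hball by lra.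
  assert (Hcube : m x ^ 3 <= 3 * K 0 * (1 - x)).
  { assert (m x ^ 3 <= m x) by (pose proof (pow_le (m x) 2 ltac:(lra)); simpl; nra).
    assert (3 * K 0 * a <= 3 * K 0 * (1 - x)) by (apply Rmult_le_compat_l; lra).
    lra. }
  pose proof (T_l_sq_ge x Hx' Hcube) as HT2. pose proof (T_l_pos x Hx').
  assert (M' < T_l mu k x); [|lra].
  apply Rnot_le_lt. intros HT.
  assert (24 * mu * m x * T_l mu k x ^ 2 <= 24 * mu * m x * M' ^ 2)
    by (apply Rmult_le_compat_l; [apply Rmult_le_pos; lra | apply pow_incr; lra]).
  assert (m x * (24 * mu * M' ^ 2) < delta * (24 * mu * M' ^ 2)) by (apply Rmult_lt_compat_r; lra).
  lra.
Qed.

End Period.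

Theorem proposition3p2 (mu k : R) (Hmu : 0 < mu) (Hk : 0 < k) :
  (forall x, x_l mu k < x < 1 ->
     is_RInt_gen (integrand mu k x) (at_right (m_of mu k x)) (at_point x)
       (T_l mu k x) /\ 0 < T_l mu k x) /\
  (forall x, x_l mu k < x < 1 -> continuous (T_l mu k) x) /\
  (forall x1 x2, x_l mu k < x1 -> x1 < x2 -> x2 < 1 ->
     T_l mu k x2 < T_l mu k x1) /\
  filterlim (T_l mu k) (at_left 1)
    (locally (/ sqrt mu * atan (k / sqrt mu))) /\
  filterlim (T_l mu k) (at_right (x_l mu k)) (Rbar_locally p_infty).
Proof.
  split; [|split; [|split; [|split]]].
  - intros x Hx. split.
    + rewrite T_l_eq by assumption. apply T_l_is_RInt_gen; assumption.
    + apply T_l_pos; assumption.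
  - intros x Hx. apply continuous_T_l; assumption.
  - intros x1 x2 H1 H12 H2. apply T_l_decreasing; assumption.
  - apply T_l_lim_1; assumption.
  - apply T_l_lim_x_l; assumption.
Qed.
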